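(* Fix $x\in\{0,1\}^n$ with exactly $K$ ones and fix the incidence matrix $T$. Consider a right node $k$ of the SAFFRON construction, with measurement vector $z_k$. (i) The singleton test at node $k$ declares an item if and only if node $k$ is a singleton, and in that case the declared item is the unique defective item connected to node $k$. (ii) If node $k$ is a doubleton whose two defective items are $\ell_0$ and $\ell^*$, then the doubleton test at node $k$ with respect to $\ell_0$ declares exactly the item $\ell^*$. (iii) If node $k$ is connected to $\ell_0$ and to at least two other defective items, then the probability, over the random draw of $s_1,s_2$, that the doubleton test at node $k$ with respect to $\ell_0$ declares an item that is not one of the defective items connected to node $k$ is at most $1/n^2$.
   Context: Items are indexed by $[n]=\{1,\dots,n\}$ with $n=2^L$. The unknown support vector is $x\in\{0,1\}^n$ with $x_\ell=1$ iff item $\ell$ is defective; exactly $K$ items are defective. For $\ell\in[n]$, $b_\ell\in\{0,1\}^L$ denotes the $L$-bit binary representation of $\ell-1$, and $\overline{v}$ denotes the bitwise complement of a binary vector $v$. Two sequences $s_1=(i_1,\dots,i_n)$ and $s_2=(j_1,\dots,j_n)$ are drawn independently and uniformly at random from $[n]^n$. The signature of item $\ell$ is the vector $u_\ell=(b_\ell;\overline{b_\ell};b_{i_\ell};\overline{b_{i_\ell}};b_{j_\ell};\overline{b_{j_\ell}})\in\{0,1\}^{6L}$ (vertical concatenation). A bipartite graph has $n$ left nodes (the items) and $M$ right nodes, with incidence matrix $T\in\{0,1\}^{M\times n}$ ($T_{k\ell}=1$ iff item $\ell$ is connected to right node $k$). For each right node $k$ there are $6L$ tests: the $r$-th of them pools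 exactly the items $\ell$ with $T_{k\ell}=1$ and $(u_\ell)_r=1$, and its outcome is positive iff the pool contains a defective item. Hence the measurement vector of right node $k$ is $z_k=\bigvee_{\ell:\,T_{k\ell}x_\ell=1}u_\ell\in\{0,1\}^{6L}$ (bitwise OR; the zero vector if there is no such $\ell$). Write $z_k=(z_k^1;\dots;z_k^6)$ with each section $z_k^w\in\{0,1\}^L$, and $z^w_{k,t}$ for its $t$-th bit. A right node is a singleton if it is connected to exactly one defective item and a doubleton if it is connected to exactly two defective items. Singleton test at node $k$: if the Hamming weight of $z_k$ equals $3L$, declare defective the item $\ell$ with $b_\ell=z_k^1$; otherwise declare nothing. Doubleton test at node $k$ with respect to an item $\ell_0$ (already known to be defective, with $T_{k\ell_0}=1$): set $r^1=b_{\ell_0}$, $r^2=b_{i_{\ell_0}}$, $r^3=b_{j_{\ell_0}}$; for $w=1,2,3$ and $t=1,\dots,L$ let $c^w_t=z^{2w-1}_{k,t}$ if $r^w_t=0$ and $c^w_t=1-z^{2w}_{k,t}$ if $r^w_t=1$; let $\ell_w\in[n]$ be the index with $b_{\ell_w}=c^w$. If $i_{\ell_1}=\ell_2$ and $j_{\ell_1}=\ell_3$, declare item $\ell_1$ defective; otherwise declare nothing. *)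

From HB Require Import structures.
From mathcomp Require Import all_boot all_order all_algebra.
Set Implicit Arguments. Unset Strict Implicit. Unset Printing Implicit Defensive.

(* Items [n] = {1..n} with n = 2^L are represented by 'I_(2^L); the ordinal
   with value m stands for item m+1, so b_l is the L-bit binary expansion of
   the ordinal's value. *)
Notation item L := 'I_(2 ^ L).

Definition bits (L : nat) (l : item L) (t : 'I_L) : bool := odd (l %/ 2 ^ t).

(* the index l with b_l = v (unique, exists since n = 2^L) *)
Definition of_bits (L : nat) (v : 'I_L -> bool) : option (item L) :=
  [pick l : item L | [forall t, bits l t == v t]].

(* signature u_l = (b_l; ~b_l; b_{i_l}; ~b_{i_l}; b_{j_l}; ~b_{j_l}),
   written section-wise: u L s1 s2 l w t = bit t of section w (w = 0..5). *)
Definition sig_u (L : nat) (s1 s2 : {ffun item L -> item L})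
    (l : item L) (w : 'I_6) (t : 'I_L) : bool :=
  match val w with
  | 0 => bits l t
  | 1 => ~~ bits l t
  | 2 => bits (s1 l) t
  | 3 => ~~ bits (s1 l) t
  | 4 => bits (s2 l) t
  | _ => ~~ bits (s2 l) t
  end.

(* measurement vector of right node k (section w, bit t): the outcome of
   the test pooling {l | T k l && u_l(w,t)}, positive iff a defective is in it *)
Definition meas (L M : nat) (x : item L -> bool) (T : 'I_M -> item L -> bool)
    (s1 s2 : {ffun item L -> item L}) (k : 'I_M) (w : 'I_6) (t : 'I_L) : bool :=
  [exists l, [&& T k l, x l & sig_u s1 s2 l w t]].

Definition meas_weight L M x T s1 s2 (k : 'I_M) : nat :=
  \sum_(w < 6) \sum_(t < L) (@meas L M x T s1 s2 k w t : nat).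

Definition conn_def (L M : nat) (x : item L -> bool) (T : 'I_M -> item L -> bool)
    (k : 'I_M) : {set item L} := [set l | T k l && x l].

Definition singleton_test L M x T s1 s2 (k : 'I_M) : option (item L) :=
  if meas_weight x T s1 s2 k == 3 * L then of_bits (@meas L M x T s1 s2 k (Ordinal (isT : 0 < 6)))
  else None.

(* c^w_t for w = 1,2,3 (here w' = 0,1,2), with r^w = bits of r *)
Definition dbl_c L M x T s1 s2 (k : 'I_M) (r : item L) (w' : nat) (t : 'I_L) : bool :=
  let zodd := @meas L M x T s1 s2 k (inord (2 * w')) t in
  let zeven := @meas L M x T s1 s2 k (inord (2 * w').+1) t in
  if bits r t then ~~ zeven else zodd.

Definition doubleton_test L M x T (s1 s2 : {ffun item L -> item L}) (k : 'I_M)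
    (l0 : item L) : option (item L) :=
  match of_bits (@dbl_c L M x T s1 s2 k l0 0),
        of_bits (@dbl_c L M x T s1 s2 k (s1 l0) 1),
        of_bits (@dbl_c L M x T s1 s2 k (s2 l0) 2) with
  | Some l1, Some l2, Some l3 =>
      if (s1 l1 == l2) && (s2 l1 == l3) then Some l1 else None
  | _, _, _ => None
  end.

Definition dbl_false_decl L M x T (k : 'I_M) (l0 : item L)
    (s : {ffun item L -> item L} * {ffun item L -> item L}) : bool :=
  match @doubleton_test L M x T s.1 s.2 k l0 with
  | Some l => l \notin conn_def x T k
  | None => false
  end.

From HB Require Import structures.
From mathcomp Require Import all_boot all_order all_algebra.
Import Order.TTheory GRing.Theory Num.Theory.
Set Implicit Arguments. Unset Strict Implicit.

(* Sections 2p and 2p+1 of a signature hold the bits of an item and their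
   complements, so for each bit the pair of measurements reports which values
   that bit takes among the defectives at the node: one bit set if they all
   agree, two if they disagree, none if there is no defective.  Hence weight
   3L singles out singletons, and at a doubleton with known item l0 the pair
   reveals the bits of the other item.  For (iii), the first decoded item l1
   does not depend on s1, s2; when it is not a connected defective, declaring
   it requires s1 l1 and s2 l1 to hit values determined by s1, s2 away from
   l1, which happens with probability 1/n each. *)

Lemma nat_bits_inj L m m' : m < 2 ^ L -> m' < 2 ^ L ->
  (forall t, t < L -> odd (m %/ 2 ^ t) = odd (m' %/ 2 ^ t)) -> m = m'.
Proof.
elim: L m m' => [|L IH] m m'; first by rewrite expn0 !ltnS !leqn0 => /eqP-> /eqP->.
move=> ltm ltm' eq_bits.
rewrite -[m]odd_double_half -[m']odd_double_half.
have := eq_bits 0 isT; rewrite expn0 !divn1 => ->.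
have half_lt a : a < 2 ^ L.+1 -> a./2 < 2 ^ L.
  by rewrite -divn2 ltn_divLR // expnS mulnC.
congr (_ + _.*2); apply: IH; rewrite ?half_lt // => t lt_tL.
by rewrite -!divn2 -!divnMA -expnS; apply: eq_bits.
Qed.

Lemma bits_inj L (l l' : item L) : bits l =1 bits l' -> l = l'.
Proof.
move=> eq_bits; apply/val_inj/(@nat_bits_inj L); rewrite ?ltn_ord // => t lt_tL.
exact: (eq_bits (Ordinal lt_tL)).
Qed.

Lemma bitsK L : pcancel (@bits L) (@of_bits L).
Proof.
move=> l; rewrite /of_bits; case: pickP => [l' /forallP eq_bits|/(_ l)].
  by congr Some; apply: bits_inj => t; apply/eqP.
by move/negbT/negP; case; apply/forallP.
Qed.

Lemma eq_of_bits L (v v' : 'I_L -> bool) : v =1 v' -> of_bits v = of_bits v'.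
Proof. by move=> eq_v; apply: eq_pick => l; apply: eq_forallb => t; rewrite eq_v. Qed.

Lemma big_ord6_pairs (F : 'I_6 -> nat) :
  \sum_(w < 6) F w = \sum_(p < 3) (F (inord (2 * p)) + F (inord (2 * p).+1)).
Proof.
rewrite !big_ord_recl !big_ord0 /= !addnA !addn0.
by do !congr (_ + _); congr F; apply: val_inj; rewrite /= ?inordK.
Qed.

Lemma ltn_sum_const (I : finType) c (G : I -> nat) (i0 : I) :
  (forall i, c <= G i) -> c < G i0 -> #|I| * c < \sum_i G i.
Proof.
move=> leG ltG; rewrite -sum_nat_const (bigD1 i0) // [X in _ < X](bigD1 i0) //= -addSn.
by rewrite leq_add // leq_sum.
Qed.

Lemma card_ffun_hit (A B : finType) (a : A) (g : {ffun A -> B} -> option B) :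
  (forall s s' : {ffun A -> B}, {in predC1 a, s =1 s'} -> g s = g s') ->
  #|[set s : {ffun A -> B} | Some (s a) == g s]| * #|B| <= #|{ffun A -> B}|.
Proof.
move=> g_off_a.
pose upd (p : {ffun A -> B} * B) := [ffun y => if y == a then p.2 else p.1 y].
rewrite -cardsT -cardsX -(card_in_imset (f := upd)); first exact: max_card.
move=> [s v] [s' v']; rewrite !inE /= => /andP[/eqP hit _] /andP[/eqP hit' _] eq_upd.
have eq_at y : upd (s, v) y = upd (s', v') y by rewrite eq_upd.
have eq_off : {in predC1 a, s =1 s'}.
  by move=> y /negbTE ne_ya; have := eq_at y; rewrite !ffunE ne_ya.
have := eq_at a; rewrite !ffunE eqxx /= => <-; congr (_, _).
apply/ffunP => y; have [->|ne_ya] := eqVneq y a; last exact: eq_off.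
by apply: Some_inj; rewrite hit hit' (g_off_a s s').
Qed.

Lemma rat_ratio_le (b N n : nat) : 0 < N -> 0 < n -> b * (n * n) <= N * N ->
  ((b%:R / (N * N)%:R : rat) <= 1 / (n ^ 2)%:R)%R.
Proof.
move=> N_gt0 n_gt0 le_bN.
rewrite ler_pdivrMr ?ltr0n ?muln_gt0 ?N_gt0 // mul1r mulrC.
by rewrite ler_pdivlMr ?ltr0n ?expn_gt0 ?n_gt0 // -natrM ler_nat -mulnn.
Qed.

Section Node.

Variables (L M : nat) (x : item L -> bool) (T : 'I_M -> item L -> bool) (k : 'I_M).

Local Notation D := (conn_def x T k).

Definition conn_has (P : pred (item L)) := [exists l, [&& T k l, x l & P l]].

Lemma conn_hasP (P : pred (item L)) : reflect (exists2 l, l \in D & P l) (conn_has P).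
Proof.
apply: (iffP existsP) => [[l /and3P[Tkl xl Pl]]|[l]]; first by exists l; rewrite // inE Tkl.
by rewrite inE => /andP[Tkl xl] Pl; exists l; apply/and3P.
Qed.

Lemma eq_conn_has (P Q : pred (item L)) : {in D, P =1 Q} -> conn_has P = conn_has Q.
Proof. by move=> eqPQ; apply/conn_hasP/conn_hasP => -[l Dl]; exists l; rewrite ?eqPQ // -eqPQ. Qed.

Lemma conn_has0 P : D = set0 -> conn_has P = false.
Proof. by move=> D0; apply/conn_hasP => -[l]; rewrite D0 inE. Qed.

Lemma conn_has1 P l0 : D = [set l0] -> conn_has P = P l0.
Proof.
move=> D1; apply/conn_hasP/idP => [[l]|]; first by rewrite D1 inE => /eqP->.
by exists l0; rewrite ?D1 ?set11.
Qed.

Lemma conn_has2 P l0 l1 : D = [set l0; l1] -> conn_has P = P l0 || P l1.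
Proof.
move=> D2; apply/conn_hasP/orP => [[l]|[]]; first by rewrite D2 !inE => /orP[]/eqP->; auto.
  by exists l0; rewrite ?D2 ?set21.
by exists l1; rewrite ?D2 ?set22.
Qed.

Lemma conn_hasC_gt0 P l : l \in D -> 0 < conn_has P + conn_has (predC P).
Proof.
move=> Dl; case Pl: (P l).
  by have -> : conn_has P by apply/conn_hasP; exists l.
suff -> : conn_has (predC P) by rewrite addn1.
by apply/conn_hasP; exists l; rewrite //= Pl.
Qed.

Lemma conn_hasC_split P l l' : l \in D -> l' \in D -> P l != P l' ->
  conn_has P + conn_has (predC P) = 2.
Proof.
move=> Dl Dl' neP; suff [-> ->] : conn_has P /\ conn_has (predC P) by [].
by case Pl: (P l) neP; case Pl': (P l') => // _;
  split; apply/conn_hasP; [exists l | exists l' | exists l' | exists l]; rewrite //= ?Pl ?Pl'.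
Qed.

Variables (s1 s2 : {ffun item L -> item L}).

(* the item whose bits (and complements) fill sections 2p and 2p+1 *)
Definition sig_item (p : nat) (l : item L) : item L :=
  if p is 0 then l else if p is 1 then s1 l else s2 l.

Lemma meas_evenE p t : p < 3 ->
  meas x T s1 s2 k (inord (2 * p)) t = conn_has (fun l => bits (sig_item p l) t).
Proof.
move=> lt_p3; rewrite /meas /sig_u /= inordK; last by case: p lt_p3 => [|[|[|]]].
by case: p lt_p3 => [|[|[|]]].
Qed.

Lemma meas_oddE p t : p < 3 ->
  meas x T s1 s2 k (inord (2 * p).+1) t = conn_has (fun l => ~~ bits (sig_item p l) t).
Proof.
move=> lt_p3; rewrite /meas /sig_u /= inordK; last by case: p lt_p3 => [|[|[|]]].
by case: p lt_p3 => [|[|[|]]].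
Qed.

Lemma meas_weightE : meas_weight x T s1 s2 k =
  \sum_(t < L) \sum_(p < 3) (conn_has (fun l => bits (sig_item p l) t)
                            + conn_has (fun l => ~~ bits (sig_item p l) t)).
Proof.
rewrite /meas_weight exchange_big; apply: eq_bigr => t _.
by rewrite big_ord6_pairs; apply: eq_bigr => p _; rewrite meas_evenE // meas_oddE.
Qed.

Lemma dbl_cE r p t : p < 3 ->
  dbl_c x T s1 s2 k r p t = if bits r t
    then ~~ conn_has (fun l => ~~ bits (sig_item p l) t)
    else conn_has (fun l => bits (sig_item p l) t).
Proof. by move=> lt_p3; rewrite /dbl_c meas_evenE // meas_oddE. Qed.

Lemma singleton_test_set1 l : D = [set l] -> singleton_test x T s1 s2 k = Some l.
Proof.
move=> D1; rewrite /singleton_test.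
have -> : meas_weight x T s1 s2 k == 3 * L.
  rewrite meas_weightE (eq_bigr (fun _ => 3)); last first.
    move=> t _; rewrite (eq_bigr (fun _ => 1)); first by rewrite sum_nat_const card_ord.
    by move=> p _; rewrite !(conn_has1 _ D1); case: bits.
  by rewrite sum_nat_const card_ord mulnC.
have -> : Ordinal (isT : 0 < 6) = inord (2 * 0) by apply: val_inj; rewrite /= inordK.
by rewrite -(bitsK l); apply: eq_of_bits => t; rewrite meas_evenE // (conn_has1 _ D1).
Qed.

Lemma singleton_test_None : 0 < L -> #|D| != 1 -> singleton_test x T s1 s2 k = None.
Proof.
move=> L_gt0 not1; rewrite /singleton_test.
have [/cards0_eq D0|/card_gt0P[l Dl]] := posnP #|D|.
  rewrite meas_weightE big1 => [|t _]; last by rewrite big1 // => p _; rewrite !conn_has0.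
  by rewrite eq_sym muln_eq0 /= eqn0Ngt L_gt0.
have [l' Dl' ne_ll'] : exists2 l', l' \in D & l != l'.
  have /card_gt1P[l1 [l2 [Dl1 Dl2 ne12]]] : 1 < #|D|.
    by rewrite ltn_neqAle eq_sym not1 card_gt0; apply/set0Pn; exists l.
  by have [->|] := eqVneq l l1; [exists l2 | exists l1].
have [t0 ne_t0] : exists t0, bits l t0 != bits l' t0.
  apply/existsP; rewrite -negb_forall; apply: contra ne_ll' => /forallP eq_b.
  by apply/eqP/bits_inj => t; apply/eqP.
suff lt_weight : 3 * L < meas_weight x T s1 s2 k by rewrite gtn_eqF.
rewrite meas_weightE -{1}(card_ord L) mulnC; apply: (ltn_sum_const (i0 := t0)) => [t|].
  rewrite -{1}(card_ord 3) -[X in X <= _]muln1 -sum_nat_const leq_sum // => p _.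
  exact: conn_hasC_gt0 Dl.
rewrite -{1}(card_ord 3) -[X in X < _]muln1.
apply: (ltn_sum_const (i0 := ord0)) => [p|]; first exact: conn_hasC_gt0 Dl.
by rewrite (conn_hasC_split Dl Dl').
Qed.

Lemma doubleton_test_set2 l0 lstar :
  D = [set l0; lstar] -> doubleton_test x T s1 s2 k l0 = Some lstar.
Proof.
move=> D2.
have decode p : p < 3 -> of_bits (dbl_c x T s1 s2 k (sig_item p l0) p) = Some (sig_item p lstar).
  move=> lt_p3; rewrite -bitsK; apply: eq_of_bits => t.
  by rewrite dbl_cE // !(conn_has2 _ D2); case: bits; case: bits.
by rewrite /doubleton_test (decode 0) // (decode 1) // (decode 2) // !eqxx.
Qed.

End Node.

Lemma eq_dbl_c L M (x : item L -> bool) (T : 'I_M -> item L -> bool) (k : 'I_M)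
    (s1 s2 s1' s2' : {ffun item L -> item L}) r p :
  p < 3 -> {in conn_def x T k, sig_item s1 s2 p =1 sig_item s1' s2' p} ->
  dbl_c x T s1 s2 k r p =1 dbl_c x T s1' s2' k r p.
Proof.
move=> lt_p3 eq_sig t; rewrite !dbl_cE //.
by congr (if _ then ~~ _ else _); apply: eq_conn_has => l Dl /=; rewrite eq_sig.
Qed.

Section FalseDeclaration.

Variables (L M : nat) (x : item L -> bool) (T : 'I_M -> item L -> bool) (k : 'I_M) (l0 : item L).
Hypothesis Dl0 : l0 \in conn_def x T k.

Local Notation D := (conn_def x T k).
Local Notation fn := {ffun item L -> item L}.

(* both hash functions may be taken equal to s, since section p only reads s_p *)
Definition hit_set (l1 : item L) (p : nat) :=
  [set s : fn | Some (s l1) == of_bits (dbl_c x T s s k (s l0) p)].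

Lemma card_hit_set l1 p : l1 \notin D -> p < 3 ->
  #|hit_set l1 p| * #|item L| <= #|fn|.
Proof.
move=> Dl1 lt_p3; apply: card_ffun_hit => s s' eq_off.
have off_D : {in D, s =1 s'} by move=> l Dl; apply: eq_off; apply: contraNneq Dl1 => <-.
rewrite eq_off; last by apply: contraNneq Dl1 => <-.
by apply/eq_of_bits/eq_dbl_c => // l Dl; rewrite /sig_item off_D.
Qed.

Lemma card_dbl_false_decl :
  #|[set s | dbl_false_decl x T k l0 s]| * (#|item L| * #|item L|) <= #|fn| * #|fn|.
Proof.
set B := [set s | _]; pose s0 : fn := [ffun=> l0].
have indep0 s1 s2 : of_bits (dbl_c x T s1 s2 k l0 0) = of_bits (dbl_c x T s0 s0 k l0 0).
  exact/eq_of_bits/eq_dbl_c.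
case decode0: (of_bits (dbl_c x T s0 s0 k l0 0)) => [l1|]; last first.
  suff -> : B = set0 by rewrite cards0.
  by apply/setP => s; rewrite !inE /dbl_false_decl /doubleton_test indep0 decode0.
have [Dl1|nDl1] := boolP (l1 \in D).
  suff -> : B = set0 by rewrite cards0.
  apply/setP => s; rewrite !inE /dbl_false_decl /doubleton_test indep0 decode0.
  by do 2!case: of_bits => // ?; case: ifP => // _; rewrite Dl1.
have B_sub : B \subset setX (hit_set l1 1) (hit_set l1 2).
  apply/subsetP => -[s1 s2]; rewrite !inE /dbl_false_decl /doubleton_test /= indep0 decode0.
  have -> : of_bits (dbl_c x T s1 s2 k (s1 l0) 1) = of_bits (dbl_c x T s1 s1 k (s1 l0) 1).
    exact/eq_of_bits/eq_dbl_c.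
  have -> : of_bits (dbl_c x T s1 s2 k (s2 l0) 2) = of_bits (dbl_c x T s2 s2 k (s2 l0) 2).
    exact/eq_of_bits/eq_dbl_c.
  do 2!case: of_bits => // ?.
  by case: ifP => // /andP[/eqP-> /eqP->]; rewrite !eqxx.
apply: (@leq_trans (#|hit_set l1 1| * #|hit_set l1 2| * (#|item L| * #|item L|))).
  by rewrite leq_mul2r -cardsX subset_leq_card ?orbT.
by rewrite mulnACA leq_mul // card_hit_set.
Qed.

End FalseDeclaration.

Theorem lemma1 (L K M : nat) (x : item L -> bool) (T : 'I_M -> item L -> bool)
    (k : 'I_M) :
  0 < L ->
  #|[set l | x l]| = K ->
  (* (i) *)
  ((forall s1 s2 : {ffun item L -> item L},
      (singleton_test x T s1 s2 k != None) = (#|conn_def x T k| == 1)) /\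
   (forall (s1 s2 : {ffun item L -> item L}) (l : item L),
      conn_def x T k = [set l] -> singleton_test x T s1 s2 k = Some l)) /\
  (* (ii) *)
  (forall (s1 s2 : {ffun item L -> item L}) (l0 lstar : item L),
      l0 != lstar -> conn_def x T k = [set l0; lstar] ->
      doubleton_test x T s1 s2 k l0 = Some lstar) /\
  (* (iii) *)
  (forall l0 : item L,
      x l0 -> T k l0 -> 2 <= #|conn_def x T k :\ l0| ->
      ((#|[set s | dbl_false_decl x T k l0 s]|%:R /
        #|{: {ffun item L -> item L} * {ffun item L -> item L}}|%:R : rat)
       <= 1 / ((2 ^ L) ^ 2)%:R)%R).
Proof.
move=> L_gt0 _; split; [split|split].
- move=> s1 s2; have [/eqP/cards1P[l D1]|not1] := eqVneq #|conn_def x T k| 1.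
    by rewrite (singleton_test_set1 _ _ D1).
  by rewrite singleton_test_None.
- exact: singleton_test_set1.
- by move=> s1 s2 l0 lstar _; apply: doubleton_test_set2.
(* the bound holds at every node *)
move=> l0 xl0 Tkl0 _.
have Dl0 : l0 \in conn_def x T k by rewrite inE Tkl0.
have N_gt0 : 0 < #|{ffun item L -> item L}| by apply/card_gt0P; exists [ffun=> l0].
have n_gt0 : 0 < #|item L| by apply/card_gt0P; exists l0.
by have := rat_ratio_le N_gt0 n_gt0 (card_dbl_false_decl Dl0); rewrite card_ord card_prod.
Qed.
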